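(* Let $V$ be a set of $n$ vertices and let $\mathcal{T}$ be a set (so no repeated members) of triangles on $V$ having no rainbow triangle. Then $|\mathcal{T}| \le \frac{n^2}{8}$.
   Context: A triangle on $V$ is a $3$-element subset $\{x,y,z\}\subseteq V$, identified with its edge set $\{\{x,y\},\{y,z\},\{x,z\}\}$. For a family $\mathcal{T}$ of triangles, a rainbow triangle is a triangle $\{x,y,z\}$ on $V$ together with three distinct members $t_1,t_2,t_3$ of $\mathcal{T}$ (distinct as members of the family) such that $\{x,y\}$ is an edge of $t_1$, $\{y,z\}$ is an edge of $t_2$ and $\{x,z\}$ is an edge of $t_3$. In other words, the three edges of $\{x,y,z\}$ can be taken, each from a different member of $\mathcal{T}$. *)

From mathcomp Require Import all_boot.
Set Implicit Arguments. Unset Strict Implicit. Unset Printing Implicit Defensive.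

Definition is_triangle (V : finType) (t : {set V}) : bool := #|t| == 3.

Definition edge_of (V : finType) (x y : V) (t : {set V}) : bool :=
  (x != y) && (x \in t) && (y \in t).

Definition has_rainbow_triangle (V : finType) (T : {set {set V}}) : Prop :=
  exists (x y z : V) (t1 t2 t3 : {set V}),
    [/\ [&& x != y, y != z & x != z],
        [&& t1 \in T, t2 \in T & t3 \in T],
        [&& t1 != t2, t2 != t3 & t1 != t3] &
        [&& edge_of x y t1, edge_of y z t2 & edge_of x z t3]].

From mathcomp Require Import all_boot.
Set Implicit Arguments. Unset Strict Implicit. Unset Printing Implicit Defensive.

(* Two edges of a triangle t of T share a vertex, so if both were also edges
   of other members t1, t2 of T, then t1 <> t2 (else t1 = t) and t1, t2, t
   would form a rainbow triangle.  Hence every t has an apex: a vertex whose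
   two edges in t lie in no other member of T.  Keep these two edges for each
   t.  Distinct members keep distinct edges, so we get a graph with 2|T| edges,
   and it is triangle-free: three kept edges from three distinct members form
   a rainbow triangle, and if two of them come from the same member t then t
   contains the whole triangle, so the third one is kept by t as well, but t
   keeps only two edges.  Mantel's theorem gives 2|T| <= n^2/4. *)

Lemma sqr_sum_leq (I : finType) (f : I -> nat) :
  (\sum_i f i) ^ 2 <= #|I| * \sum_i f i ^ 2.
Proof.
have sum_sq2 : \sum_i \sum_j (f i ^ 2 + f j ^ 2) = 2 * (#|I| * \sum_i f i ^ 2).
  under eq_bigr do rewrite big_split /= sum_nat_const.
  by rewrite big_split /= sum_nat_const -big_distrr /= mulnC addnn mul2n.
rewrite -(leq_pmul2l (isT : 0 < 2)) -sum_sq2 -mulnn big_distrl big_distrr /=.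
apply: leq_sum => i _; rewrite big_distrr big_distrr /=; apply: leq_sum => j _.
by case: (nat_Cauchy (f i) (f j)).
Qed.

Lemma sum_pair_leq (I : finType) (F : I -> nat) i j :
  i != j -> F i + F j <= \sum_k F k.
Proof. by move=> ij; rewrite (bigD1 i) //= (bigD1 j) 1?eq_sym //= addnA leq_addr. Qed.

Lemma sum_row_col_leq (I : finType) (F : I -> I -> nat) i :
  F i i = 0 -> \sum_j F i j + \sum_j F j i <= \sum_j \sum_k F j k.
Proof.
move=> Fii0; rewrite [X in _ <= X](bigD1 i) //= leq_add2l (bigD1 i) //= Fii0.
by apply: leq_sum => j _; rewrite (bigD1 i) //= leq_addr.
Qed.

Definition degree (V : finType) (r : rel V) (x : V) : nat := \sum_y r x y.

Section Mantel.
Variables (V : finType) (r : rel V).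
Hypothesis r_sym : symmetric r.
Hypothesis r_triangle_free : forall x y z, r x y -> r x z -> r y z -> False.

Lemma degreeD_leq x y : r x y -> degree r x + degree r y <= #|V|.
Proof.
move=> rxy; rewrite -big_split -sum1_card /=; apply: leq_sum => z _.
by case rxz: (r x z); case ryz: (r y z) => //; case: (r_triangle_free rxy rxz ryz).
Qed.

(* Sum [degreeD_leq] over all ordered edges xy: each vertex x is an endpoint
   of 2 * degree r x of them. *)
Lemma sum_degree_sq : 2 * \sum_x degree r x ^ 2 <= #|V| * \sum_x degree r x.
Proof.
have row : \sum_x \sum_y r x y * degree r x = \sum_x degree r x ^ 2.
  by apply: eq_bigr => x _; rewrite -big_distrl; apply: mulnn.
have col : \sum_x \sum_y r x y * degree r y = \sum_x degree r x ^ 2.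
  rewrite exchange_big; apply: eq_bigr => y _; rewrite -big_distrl -mulnn.
  by congr (_ * _); apply: eq_bigr => x _; rewrite r_sym.
rewrite mul2n -addnn -{1}row -col -big_split big_distrr /=; apply: leq_sum => x _.
rewrite -big_split big_distrr /=; apply: leq_sum => y _.
by case rxy: (r x y); rewrite /= ?mul0n // !mul1n muln1 (degreeD_leq rxy).
Qed.

Lemma mantel : 2 * \sum_x \sum_y r x y <= #|V| ^ 2.
Proof.
have := sqr_sum_leq (degree r); have := sum_degree_sq.
rewrite -[\sum_x \sum_y _]/(\sum_x degree r x).
set M := \sum_x degree r x; set S := \sum_x degree r x ^ 2 => SM CS.
have [->|M_gt0] := posnP M; first by rewrite muln0.
rewrite -(leq_pmul2r M_gt0) -mulnA mulnn; apply: leq_trans (leq_mul (leqnn 2) CS) _.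
by rewrite mulnCA -mulnn -mulnA leq_mul2l SM orbT.
Qed.

End Mantel.

Lemma card3_eq (V : finType) (t : {set V}) a b c :
  #|t| = 3 -> a \in t -> b \in t -> c \in t -> [/\ a != b, b != c & a != c] ->
  t = [set a; b; c].
Proof.
move=> t3 at_ bt ct [ab bc ac]; apply/eqP; rewrite eq_sym eqEcard t3.
apply/andP; split; first by apply/subsetP => y; rewrite !inE -orbA => /or3P[] /eqP->.
by apply/card_gt2P; exists a, b, c; rewrite !inE !eqxx ?orbT (eq_sym c).
Qed.

Lemma edge_ofP (V : finType) (x y : V) (t : {set V}) :
  reflect [/\ x != y, x \in t & y \in t] (edge_of x y t).
Proof. by rewrite /edge_of -andbA; apply: and3P. Qed.

Lemma edge_ofC (V : finType) (x y : V) (t : {set V}) : edge_of x y t = edge_of y x t.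
Proof. by rewrite /edge_of eq_sym -!andbA (andbC (x \in t)). Qed.

Section ApexGraph.
Variables (V : finType) (T : {set {set V}}).

Definition private_edge (x y : V) (t : {set V}) : bool :=
  edge_of x y t && [forall t' in T, edge_of x y t' ==> (t' == t)].

Definition apex (v : V) (t : {set V}) : bool :=
  (v \in t) && [forall y in t :\ v, private_edge v y t].

(* A triangle whose three edges are private has three apexes; keeping only the
   edges at one chosen apex is what makes apex_graph triangle-free. *)
Definition apex_edge (t : {set V}) (x y : V) : bool :=
  private_edge x y t && ([pick v | apex v t] \in [:: Some x; Some y]).

Definition apex_graph : rel V := fun x y => [exists t in T, apex_edge t x y].

Lemma private_edgeC x y t : private_edge x y t = private_edge y x t.
Proof.
rewrite /private_edge edge_ofC; congr (_ && _).
by apply: eq_forallb => t'; rewrite edge_ofC.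
Qed.

Lemma private_edgeW x y t : private_edge x y t -> edge_of x y t.
Proof. by case/andP. Qed.

Lemma private_edge_uniq x y t t' :
  private_edge x y t -> t' \in T -> x \in t' -> y \in t' -> t' = t.
Proof.
case/andP=> /edge_ofP[xy _ _] /forall_inP uniq_t t'T xt' yt'.
by apply/eqP; apply: (implyP (uniq_t t' t'T)); apply/edge_ofP.
Qed.

Lemma nonprivate_edge_shared x y t : edge_of x y t -> ~~ private_edge x y t ->
  exists t', [/\ t' \in T, edge_of x y t' & t' != t].
Proof.
rewrite /private_edge => -> /= /forall_inPn[t' t'T].
by rewrite negb_imply => /andP[e' t't]; exists t'.
Qed.

Lemma apex_edgeC t x y : apex_edge t x y = apex_edge t y x.
Proof. by rewrite /apex_edge private_edgeC !inE orbC. Qed.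

Lemma apex_graph_sym : symmetric apex_graph.
Proof. by move=> x y; apply: eq_existsb => t; rewrite apex_edgeC. Qed.

Lemma rainbowI x y z t1 t2 t3 :
  t1 \in T -> t2 \in T -> t3 \in T -> [/\ t1 != t2, t2 != t3 & t1 != t3] ->
  edge_of x y t1 -> edge_of y z t2 -> edge_of x z t3 -> has_rainbow_triangle T.
Proof.
move=> t1T t2T t3T [t12 t23 t13] e1 e2 e3; exists x, y, z, t1, t2, t3.
case/edge_ofP: (e1) => xy _ _; case/edge_ofP: (e2) => yz _ _.
case/edge_ofP: (e3) => xz _ _.
by rewrite xy yz xz t1T t2T t3T t12 t23 t13 e1 e2 e3.
Qed.

Lemma apex_edge_triangle t x y z :
  apex_edge t x y -> apex_edge t y z -> apex_edge t x z -> False.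
Proof.
rewrite /apex_edge; case: [pick v | apex v t] => [m|]; last by rewrite !andbF.
move=> /andP[/private_edgeW/edge_ofP[xy _ _] mxy] /andP[/private_edgeW/edge_ofP[yz _ _] myz].
move=> /andP[/private_edgeW/edge_ofP[xz _ _] mxz].
rewrite !inE !(inj_eq Some_inj) in mxy myz mxz.
have [m_x|mx] := eqVneq m x; first by rewrite m_x (negbTE xy) (negbTE xz) in myz.
rewrite (negbTE mx) /= in mxy.
by rewrite (eqP mxy) eq_sym (negbTE xy) (negbTE yz) in mxz.
Qed.

Lemma sum_apex_edge_leq x y : \sum_(t in T) apex_edge t x y <= apex_graph x y.
Proof.
have [/exists_inP[t0 t0T k0]|ng] := boolP (apex_graph x y); last first.
  rewrite big1 // => t tT; apply/eqP; rewrite eqb0; apply: contraNN ng => k.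
  by apply/exists_inP; exists t.
rewrite (bigD1 t0) //= k0 big1 // => t /andP[tT tt0]; apply/eqP; rewrite eqb0.
apply: contraNN tt0 => /andP[/private_edgeW/edge_ofP[_ xt yt] _]; apply/eqP.
by case/andP: k0 => p0 _; apply: private_edge_uniq p0 tT xt yt.
Qed.

Hypothesis T_triangles : forall t, t \in T -> is_triangle t.
Hypothesis T_rainbow_free : ~ has_rainbow_triangle T.

Lemma triangle_eq t a b c : t \in T -> a \in t -> b \in t -> c \in t ->
  [/\ a != b, b != c & a != c] -> t = [set a; b; c].
Proof. by move/T_triangles/eqP; apply: card3_eq. Qed.

Lemma private_edge_adjacent t a b c : t \in T -> a \in t -> b \in t -> c \in t ->
  [/\ a != b, b != c & a != c] -> private_edge a b t || private_edge b c t.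
Proof.
move=> tT at_ bt ct abc; case: (abc) => ab bc ac; apply/norP => -[nab nbc].
have [t1 [t1T e1 t1t]] : exists t1, [/\ t1 \in T, edge_of a b t1 & t1 != t].
  by apply: nonprivate_edge_shared nab; apply/edge_ofP.
have [t2 [t2T e2 t2t]] : exists t2, [/\ t2 \in T, edge_of b c t2 & t2 != t].
  by apply: nonprivate_edge_shared nbc; apply/edge_ofP.
have t12 : t1 != t2.
  apply: contra_neq t1t => t12; move: e1 e2; rewrite -t12 => /edge_ofP[_ at1 bt1].
  case/edge_ofP=> _ _ ct1.
  by rewrite (triangle_eq t1T at1 bt1 ct1 abc) -(triangle_eq tT at_ bt ct abc).
apply: T_rainbow_free; apply: (rainbowI t1T t2T tT) e1 e2 _ => //.
exact/edge_ofP.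
Qed.

Lemma apexI t a b c : t \in T -> a \in t -> b \in t -> c \in t ->
  [/\ a != b, b != c & a != c] -> private_edge a b t -> private_edge a c t ->
  apex a t.
Proof.
move=> tT at_ bt ct abc pab pac; rewrite /apex at_; apply/forall_inP => y /setD1P[ya].
rewrite {1}(triangle_eq tT at_ bt ct abc) !inE -orbA => /or3P[/eqP y_a|/eqP->|/eqP->] //.
by rewrite y_a eqxx in ya.
Qed.

Lemma apex_opposite t a b c : t \in T -> a \in t -> b \in t -> c \in t ->
  [/\ a != b, b != c & a != c] -> ~~ private_edge a b t -> apex c t.
Proof.
move=> tT at_ bt ct [ab bc ac] nab.
have pbc : private_edge b c t.
  by have := private_edge_adjacent tT at_ bt ct (And3 ab bc ac); rewrite (negbTE nab).
have pac : private_edge a c t.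
  have ba : b != a by rewrite eq_sym.
  have := private_edge_adjacent tT bt at_ ct (And3 ba ac bc).
  by rewrite private_edgeC (negbTE nab).
apply: (apexI tT ct at_ bt); rewrite 1?private_edgeC //.
by split; rewrite // eq_sym.
Qed.

Lemma triangle_has_apex t : t \in T -> exists v, apex v t.
Proof.
move=> tT; have /card_gt2P[a [b [c [[at_ bt ct] [ab bc ca]]]]] : 2 < #|t|.
  by rewrite (eqP (T_triangles tT)).
have ac : a != c by rewrite eq_sym.
have [pab|nab] := boolP (private_edge a b t); last first.
  by exists c; apply: (apex_opposite tT at_ bt ct (And3 ab bc ac)).
have [pac|nac] := boolP (private_edge a c t); last first.
  have cb : c != b by rewrite eq_sym.
  by exists b; apply: (apex_opposite tT at_ ct bt (And3 ac cb ab)).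
by exists a; apply: (apexI tT at_ bt ct).
Qed.

Lemma sum_apex_edge_geq t : t \in T -> 4 <= \sum_x \sum_y apex_edge t x y.
Proof.
move=> tT; have [m pick_m] : exists m, [pick v | apex v t] = Some m.
  case: pickP => [m _|no_apex]; first by exists m.
  by case: (triangle_has_apex tT) => v; rewrite no_apex.
have /andP[mt /forall_inP pm] : apex m t by move: pick_m; case: pickP => // v av [<-].
have /card_gt1P[u [w [ut wt uw]]] : 1 < #|t :\ m|.
  by move: (cardsD1 m t); rewrite (eqP (T_triangles tT)) mt add1n => -[<-].
have kept_m y : private_edge m y t -> apex_edge t m y && apex_edge t y m.
  move=> pmy; rewrite [apex_edge t y m]apex_edgeC andbb.
  by rewrite /apex_edge pmy pick_m !inE eqxx.
have /andP[kmu kum] := kept_m u (pm u ut); have /andP[kmw kwm] := kept_m w (pm w wt).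
pose F x y : nat := apex_edge t x y; change (4 <= \sum_x \sum_y F x y).
have Fmm : F m m = 0 by rewrite /F /apex_edge /private_edge /edge_of eqxx.
apply: (leq_trans _ (sum_row_col_leq Fmm)); apply: (@leq_add 2 2).
  by apply: (leq_trans _ (sum_pair_leq (F m) uw)); rewrite /F kmu kmw.
by apply: (leq_trans _ (sum_pair_leq (F^~ m) uw)); rewrite /F kum kwm.
Qed.

Lemma apex_graph_triangle_free x y z :
  apex_graph x y -> apex_graph x z -> apex_graph y z -> False.
Proof.
move=> /exists_inP[t1 t1T k1] /exists_inP[t3 t3T k3] /exists_inP[t2 t2T k2].
case/andP: (k1) => p1 _; case/andP: (k2) => p2 _; case/andP: (k3) => p3 _.
case/edge_ofP: (private_edgeW p1) => _ xt1 yt1.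
case/edge_ofP: (private_edgeW p2) => _ yt2 zt2.
case/edge_ofP: (private_edgeW p3) => _ xt3 zt3.
have [t12|t12] := eqVneq t1 t2.
  have t31 : t1 = t3 by apply: private_edge_uniq p3 t1T xt1 _; rewrite t12.
  by move: k2 k3; rewrite -t12 -t31; apply: apex_edge_triangle k1.
have t23 : t2 != t3.
  apply: contra_neq t12 => t23.
  by apply: esym (private_edge_uniq p1 t2T _ yt2); rewrite t23.
have t13 : t1 != t3.
  by apply: contra_neq t12 => t13; apply: private_edge_uniq p2 t1T yt1 _; rewrite t13.
apply: T_rainbow_free; apply: (rainbowI t1T t2T t3T _ (private_edgeW p1)
  (private_edgeW p2) (private_edgeW p3)).
by split.
Qed.

Lemma card_apex_graph_geq : 4 * #|T| <= \sum_x \sum_y apex_graph x y.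
Proof.
rewrite mulnC -sum_nat_const.
apply: (@leq_trans (\sum_(t in T) \sum_x \sum_y apex_edge t x y)).
  by apply: leq_sum => t; apply: sum_apex_edge_geq.
rewrite exchange_big; apply: leq_sum => x _.
rewrite exchange_big; apply: leq_sum => y _.
exact: sum_apex_edge_leq.
Qed.

End ApexGraph.

Theorem theorem2p1 (V : finType) (T : {set {set V}}) :
  (forall t, t \in T -> is_triangle t) ->
  ~ has_rainbow_triangle T ->
  8 * #|T| <= #|V| ^ 2.
Proof.
move=> T_triangles T_rainbow_free.
have := mantel (apex_graph_sym T) (apex_graph_triangle_free T_rainbow_free).
apply: leq_trans; rewrite (_ : 8 = 2 * 4) // -mulnA leq_mul2l /=.
exact: card_apex_graph_geq.
Qed.
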